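(* Let $H$ be an equibipartite tree on $2l$ vertices. If $H$ does not contain a perfect matching, then there exists a partition of $V(H)$ into two classes of different sizes such that the larger class induces no edges and the smaller class induces exactly one edge.
   Context: A tree is equibipartite if its two bipartition classes have the same size. *)

From mathcomp Require Import all_boot.
Set Implicit Arguments. Unset Strict Implicit. Unset Printing Implicit Defensive.

Section Graphs.
Variable T : finType.

Definition simple_graph (e : rel T) : Prop := symmetric e /\ irreflexive e.

Definition is_edge (e : rel T) (E : {set T}) : bool :=
  [exists x, exists y, e x y && (E == [set x; y])].

Definition induced_edges (e : rel T) (S : {set T}) : {set {set T}} :=
  [set E : {set T} | is_edge e E & E \subset S].

Definition connected (e : rel T) : Prop := forall x y : T, connect e x y.

Definition acyclic (e : rel T) : Prop :=
  forall c : seq T, uniq c -> 3 <= size c -> ~~ cycle e c.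

Definition is_tree (e : rel T) : Prop :=
  [/\ simple_graph e, 0 < #|T|, connected e & acyclic e].

Definition independent (e : rel T) (S : {set T}) : Prop :=
  forall x y, x \in S -> y \in S -> ~~ e x y.

Definition equibipartite (e : rel T) : Prop :=
  exists A : {set T}, [/\ independent e A, independent e (~: A) & #|A| = #|~: A|].

Definition perfect_matching (e : rel T) (M : {set {set T}}) : Prop :=
  [/\ forall E, E \in M -> is_edge e E, trivIset M & cover M = [set: T]].

Definition has_perfect_matching (e : rel T) : Prop :=
  exists M, perfect_matching e M.

End Graphs.

From mathcomp Require Import all_boot all_order all_algebra zify.
Set Implicit Arguments. Unset Strict Implicit. Unset Printing Implicit Defensive.
Import Order.TTheory GRing.Theory Num.Theory.

(* Let A be a bipartition class and, for an edge uv, let side u v be the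
   component of u once uv is deleted, with excess |A :&: side u v| - |side u v :\: A|.
   If some edge uv with u in A has a side of negative excess, exchanging the two
   classes inside side u v gives the required partition: every edge other than uv
   is still cut, uv lies in the smaller class, and the new class has gained
   vertices.  Otherwise the integer weight of an edge xy, namely the excess of
   side x y taken with sign + iff x is in A, is nonnegative and symmetric; since
   the sides at x partition the other vertices and A is balanced, the weights
   around every vertex sum to 1.  So each vertex has exactly one neighbour of
   positive weight, and these pairs form a perfect matching. *)

Section TreeSides.
Variables (T : finType) (e : rel T).
Hypotheses (e_sym : symmetric e) (e_irr : irreflexive e).
Hypotheses (e_conn : connected e) (e_acyc : acyclic e).

Definition del_edge (u v : T) : rel T :=
  [rel x y | e x y && ([set x; y] != [set u; v])].

Definition side (u v : T) : {set T} := [set x | connect (del_edge u v) u x].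

Lemma del_edge_sym u v : symmetric (del_edge u v).
Proof. by move=> x y; rewrite /del_edge /= e_sym setUC. Qed.

Lemma del_edgeC u v : del_edge u v =2 del_edge v u.
Proof. by move=> x y; rewrite /del_edge /= [[set u; v]]setUC. Qed.

Lemma del_edgeE u v x y : u \notin [set x; y] -> del_edge u v x y = e x y.
Proof.
move=> ux; rewrite /del_edge /=; case: eqP => [xy_uv|]; last by rewrite andbT.
by rewrite xy_uv set21 in ux.
Qed.

Lemma path_del_edge u v x p :
  u \notin x :: p -> path e x p -> path (del_edge u v) x p.
Proof.
elim: p x => [//|y p IHp] x /=; rewrite !inE => /norP[ux /norP[uy up]].
case/andP=> exy pp; rewrite del_edgeE ?exy ?IHp ?inE ?negb_or ?ux ?uy //=.
Qed.

Lemma side_cross u v x y :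
  e x y -> x \in side u v -> y \notin side u v -> [set x; y] = [set u; v].
Proof.
move=> exy; rewrite !inE => ux; apply: contraNeq => xy_uv.
by apply: connect_trans ux (connect1 _); rewrite /del_edge /= exy xy_uv.
Qed.

Lemma connect_uniq_path (r : rel T) x y : connect r x y ->
  exists2 p, path r x p & uniq (x :: p) /\ last x p = y.
Proof.
by case/connectP=> p /shortenP[p' pp' up' _] ->; exists p'.
Qed.

Lemma side_cover u v x : e u v -> x \notin side u v -> x \in side v u.
Proof.
move=> euv xNuv; have [p ep [uniq_vp lastx]] := connect_uniq_path (e_conn v x).
have vu : v != u by apply: contraTneq euv => ->; rewrite e_irr.
rewrite inE -lastx; case up: (u \in p); last first.
  apply/connectP; exists p => //; rewrite (eq_path (del_edgeC v u)).
  by apply: path_del_edge ep; rewrite inE negb_or eq_sym vu up.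
case/splitPr: up uniq_vp ep lastx => p1 p2.
rewrite -cat_cons cat_uniq cat_path last_cat /= => /and3P[_ /norP[_ /hasPn p1Np2] _].
case/and3P=> _ _ ep2 lastx; case/negP: xNuv; rewrite inE -lastx.
apply/connectP; exists p2 => //; rewrite (eq_path (del_edgeC u v)).
apply: path_del_edge ep2; rewrite inE negb_or vu /=.
by apply/negP => /p1Np2; rewrite /= inE eqxx.
Qed.

Lemma side_disjoint u v x : e u v -> x \in side u v -> x \notin side v u.
Proof.
move=> euv; rewrite !inE => ux; apply/negP => vx.
have uv : connect (del_edge u v) u v.
  rewrite (eq_connect (del_edgeC v u)) in vx.
  by apply: connect_trans ux _; rewrite (sym_connect_sym (del_edge_sym u v)).
have [p ep [uniq_up lastv]] := connect_uniq_path uv.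
have size_up : 3 <= size (u :: p).
  case: p ep uniq_up lastv => [|y [|z p]] //=.
    by move=> _ _ uv_eq; rewrite -uv_eq e_irr in euv.
  by move=> + _ uv_eq; rewrite uv_eq /del_edge /= eqxx andbF.
apply/negP: (e_acyc uniq_up size_up); rewrite /= rcons_path lastv e_sym euv andbT negbK.
by apply: sub_path ep => y z /andP[].
Qed.

Lemma side_compl u v : e u v -> side v u = ~: side u v.
Proof.
move=> euv; apply/setP => x; rewrite in_setC.
by case: (boolP (x \in side u v)) => [/(side_disjoint euv)/negbTE|/(side_cover euv)] ->.
Qed.

Lemma notin_side a b : e a b -> a \notin side b a.
Proof. by move=> eab; apply: side_disjoint eab _; rewrite inE connect0. Qed.

Lemma side_sub a b b' : e a b -> e a b' -> b != b' -> side b' a \subset side a b.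
Proof.
move=> eab eab' bb'; apply/subsetP => y; rewrite !inE => /connectP[p ep ->].
have aNp : a \notin b' :: p.
  apply/negP => /(path_connect ep) ab'; case/negP: (notin_side eab').
  by rewrite inE.
have ab' : [set a; b'] != [set a; b].
  have /negbTE b'a : b' != a by apply: contraTneq eab' => ->; rewrite e_irr.
  by apply: contraNneq bb' => /setP/(_ b'); rewrite !inE eqxx orbT b'a /= => /esym/eqP ->.
apply: (connect_trans (connect1 (_ : del_edge a b a b'))); first by rewrite /del_edge /= eab' ab'.
apply/connectP; exists p => //; apply: path_del_edge aNp _.
by apply: sub_path ep => z w /andP[].
Qed.

Lemma side_split a z : z != a -> exists2 b, e a b & z \in side b a.
Proof.
move=> za; have [[|b p] /= ep [uniq_ap lastz]] := connect_uniq_path (e_conn a z).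
  by rewrite lastz eqxx in za.
case/andP: ep => eab ep; exists b => //; rewrite inE -lastz.
apply/connectP; exists p => //; rewrite (eq_path (del_edgeC b a)).
by case/andP: uniq_ap => aNbp _; apply: path_del_edge.
Qed.

Lemma side_uniq a b b' z :
  e a b -> e a b' -> z \in side b a -> z \in side b' a -> b = b'.
Proof.
move=> eab eab' zb zb'; apply/eqP/negP => /negP bb'.
by have /(side_disjoint eab) := subsetP (side_sub eab eab' bb') z zb'; rewrite zb.
Qed.

Local Open Scope ring_scope.

Lemma big_sides (V : nmodType) (f : T -> V) a :
  \sum_(z | z != a) f z = \sum_(b | e a b) \sum_(z in side b a) f z.
Proof.
rewrite (exchange_big_dep (fun z => z != a)) /=; last first.
  by move=> b z eab; apply: contraTneq => ->; apply: notin_side.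
apply: eq_bigr => z za; have [b eab zb] := side_split za.
rewrite (bigD1 b) ?eab ?zb //= big1 ?addr0 // => b' /andP[/andP[eab' zb'] b'b].
by rewrite (side_uniq eab' eab zb' zb) eqxx in b'b.
Qed.
End TreeSides.

Lemma independent_compl_edge (T : finType) (e : rel T) (A : {set T}) :
  independent e A -> independent e (~: A) ->
  forall x y, e x y -> (x \in A) = (y \notin A).
Proof.
move=> indA indAC x y exy; case xA: (x \in A); case yA: (y \in A) => //.
- by have := indA x y xA yA; rewrite exy.
- by have := indAC x y; rewrite !inE xA yA exy => /(_ isT isT).
Qed.

Definition symdiff (T : finType) (A B : {set T}) : {set T} :=
  [set x | (x \in A) (+) (x \in B)].

Section SwapAcrossCut.
Variables (T : finType) (e : rel T) (A s : {set T}) (u v : T).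
Hypothesis e_sym : symmetric e.
Hypothesis A_edge : forall x y, e x y -> (x \in A) = (y \notin A).
Hypotheses (euv : e u v) (uA : u \in A) (us : u \in s) (vNs : v \notin s).
Hypothesis s_cut : forall x y, e x y -> x \in s -> y \notin s -> [set x; y] = [set u; v].

Local Notation X := (symdiff A s).

Lemma u_notin_symdiff : u \notin X.
Proof. by rewrite inE uA us. Qed.

Lemma v_notin_symdiff : v \notin X.
Proof. by rewrite inE -(negbK (v \in A)) -(A_edge euv) uA (negbTE vNs). Qed.

Lemma edge_symdiff x y : e x y -> [set x; y] = [set u; v] \/ (x \in X) = (y \notin X).
Proof.
move=> exy; case: (boolP ((x \in s) == (y \in s))) => [/eqP xy_s | xy_s].
  by right; rewrite !inE (A_edge exy) xy_s addNb.
left; move: xy_s; case xs: (x \in s); case ys: (y \in s) => // _.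
  by apply: s_cut; rewrite ?xs ?ys.
by rewrite setUC; apply: s_cut; rewrite 1?e_sym ?xs ?ys.
Qed.

Lemma induced_symdiff : induced_edges e X = set0.
Proof.
apply/setP => E; rewrite !inE; apply/negP => /andP[/existsP[x /existsP[y]]].
case/andP=> exy /eqP-> /subsetP xyX.
have [xy_uv|] := edge_symdiff exy.
  by case/negP: u_notin_symdiff; apply: xyX; rewrite xy_uv set21.
by rewrite (xyX x (set21 x y)) (xyX y (set22 x y)).
Qed.

Lemma induced_symdiffC : induced_edges e (~: X) = [set [set u; v]].
Proof.
apply/setP => E; rewrite !inE; apply/idP/idP.
  case/andP=> /existsP[x /existsP[y /andP[exy /eqP->]]] /subsetP xyXC.
  have [-> //|] := edge_symdiff exy.
  have := xyXC x (set21 x y); have := xyXC y (set22 x y).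
  by rewrite !in_setC => /negbTE-> /negbTE->.
move/eqP->; apply/andP; split; first by apply/existsP; exists u; apply/existsP; exists v; rewrite euv /=.
by apply/subsetP => z /set2P[]->; rewrite in_setC ?u_notin_symdiff ?v_notin_symdiff.
Qed.

Lemma card_symdiff : #|A| = #|~: A| -> #|A :&: s| < #|s :\: A| -> #|~: X| < #|X|.
Proof.
move=> A_half A_lt; have XA : X :&: A = A :\: s.
  by apply/setP => z; rewrite !inE; case: (z \in A); case: (z \in s).
have XDA : X :\: A = s :\: A.
  by apply/setP => z; rewrite !inE; case: (z \in A); case: (z \in s).
have := cardsID A X; have := cardsID s A; have := cardsC X; have := cardsC A.
rewrite XA XDA; lia.
Qed.

Lemma symdiff_partition : #|A| = #|~: A| -> #|A :&: s| < #|s :\: A| ->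
  [/\ #|~: X| < #|X|, induced_edges e X = set0 & #|induced_edges e (~: X)| = 1].
Proof.
by move=> A_half A_lt; rewrite induced_symdiff induced_symdiffC cards1 card_symdiff.
Qed.
End SwapAcrossCut.

Lemma has_perfect_matching_partner (T : finType) (e m : rel T) :
  subrel m e -> symmetric m -> (forall x, exists! y, m x y) ->
  has_perfect_matching e.
Proof.
move=> me m_sym m_uniq.
pose M := [set E : {set T} | [exists x, exists y, m x y && (E == [set x; y])]].
have inM E z : E \in M -> z \in E -> exists2 y, m z y & E = [set z; y].
  rewrite inE => /existsP[x /existsP[y /andP[mxy /eqP->]]] /set2P[]->.
    by exists y.
  by exists x; rewrite 1?m_sym // setUC.
exists M; split.
- move=> E; rewrite inE => /existsP[x /existsP[y /andP[mxy EE]]].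
  by apply/existsP; exists x; apply/existsP; exists y; rewrite me.
- apply/trivIsetP => E1 E2 /inM E1z /inM E2z; apply: contraR.
  rewrite -setI_eq0 => /set0Pn[z]; rewrite inE => /andP[/E1z[y1 mzy1 ->] /E2z[y2 mzy2 ->]].
  by have [y [_ yU]] := m_uniq z; rewrite -(yU _ mzy1) -(yU _ mzy2).
- apply/setP => z; rewrite inE; apply/bigcupP.
  have [y [mzy _]] := m_uniq z; exists [set z; y]; last exact: set21.
  by rewrite inE; apply/existsP; exists z; apply/existsP; exists y; rewrite mzy /=.
Qed.

Lemma psumr_eq1_uniq (I : finType) (P : pred I) (F : I -> int) :
  (forall i, P i -> 0 <= F i)%R -> (\sum_(i | P i) F i = 1)%R ->
  exists! i, P i && (0 < F i)%R.
Proof.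
move=> F_ge0 sumF1; have [i /andP[Pi Fi_gt0]] : exists i, P i && (0 < F i)%R.
  by apply: psumr_neq0P F_ge0 _; rewrite sumF1.
exists i; split=> [|j /andP[Pj Fj_gt0]]; first by rewrite Pi.
apply/eqP/negPn/negP => ji.
have rest_ge0 : (0 <= \sum_(k | P k && (k != i) && (k != j)) F k)%R.
  by apply: sumr_ge0 => k /andP[/andP[Pk _] _]; apply: F_ge0.
move: sumF1; rewrite (bigD1 i) // (bigD1 j) /=; last by rewrite Pj eq_sym.
(* [lia] only recognises the remaining sum as an integer once it is cast to [int]. *)
move: (\sum_(k | _) F k)%R rest_ge0 => r; rewrite -[r]/(r : int); lia.
Qed.

Section Excess.
Local Open Scope ring_scope.

Variables (T : finType) (e : rel T) (A : {set T}).
Hypotheses (e_sym : symmetric e) (e_irr : irreflexive e).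
Hypotheses (e_conn : connected e) (e_acyc : acyclic e).
Hypothesis A_edge : forall x y, e x y -> (x \in A) = (y \notin A).
Hypothesis A_half : #|A| = #|~: A|.

Definition charge (x : T) : int := if x \in A then 1 else -1.
Definition excess (S : {set T}) : int := \sum_(x in S) charge x.

Lemma excessE S : excess S = #|A :&: S|%:Z - #|S :\: A|%:Z.
Proof.
rewrite /excess (bigID (mem A)) /=.
rewrite (eq_bigl (mem (A :&: S))) => [|x]; last by rewrite !inE andbC.
rewrite [X in _ + X](eq_bigl (mem (S :\: A))) => [|x]; last by rewrite !inE andbC.
rewrite (eq_bigr (fun=> 1)) => [|x /setIP[xA _]]; last by rewrite /charge xA.
rewrite [X in _ + X](eq_bigr (fun=> -1)) => [|x /setDP[_ /negbTE xNA]]; last by rewrite /charge xNA.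
by rewrite !sumr_const mulNrn !natz.
Qed.

Lemma excessT : excess setT = 0.
Proof. by rewrite excessE setIT setTD A_half subrr. Qed.

Lemma excessC S : excess (~: S) = - excess S.
Proof.
rewrite !excessE; have := cardsID A S; have := cardsID A (~: S).
have := cardsID S A; have := cardsC S; have := cardsC A.
rewrite setIC [~: S :&: A]setIC setDE; lia.
Qed.

Lemma excess_sideC u v : e u v -> excess (side e v u) = - excess (side e u v).
Proof. by move=> euv; rewrite side_compl // excessC. Qed.

Lemma charge_edge x y : e x y -> charge y = - charge x.
Proof. by move=> exy; rewrite /charge (A_edge exy); case: (y \in A); rewrite ?opprK. Qed.

Lemma sum_excess_sides x : \sum_(y | e x y) excess (side e x y) = charge x.
Proof.
have charge_rest : \sum_(z | z != x) charge z = - charge x.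
  apply/eqP; rewrite -addr_eq0 addrC -[X in _ == X]excessT /excess [X in _ == X](bigD1 x) ?in_setT //=.
  by rewrite [X in _ == _ + X](eq_bigl (fun z => z != x)) // => z; rewrite in_setT.
rewrite (eq_bigr (fun y => - excess (side e y x))) => [|y exy]; last first.
  by apply: excess_sideC; rewrite e_sym.
by rewrite sumrN -(big_sides e_sym e_irr e_conn e_acyc) charge_rest opprK.
Qed.

Definition edge_weight x y : int := charge x * excess (side e x y).

Lemma edge_weightC x y : e x y -> edge_weight y x = edge_weight x y.
Proof. by move=> exy; rewrite /edge_weight (charge_edge exy) (excess_sideC exy) mulrNN. Qed.

Lemma sum_edge_weight x : \sum_(y | e x y) edge_weight x y = 1.
Proof.
rewrite -mulr_sumr sum_excess_sides /charge.
by case: (x \in A); rewrite ?mulrNN mulr1.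
Qed.

Hypothesis excess_ge0 : forall u v, e u v -> u \in A -> 0 <= excess (side e u v).

Lemma edge_weight_ge0 x y : e x y -> 0 <= edge_weight x y.
Proof.
move=> exy; case xA: (x \in A).
  by rewrite /edge_weight /charge xA mul1r excess_ge0.
have yA : y \in A by rewrite -[y \in A]negbK -(A_edge exy) xA.
by rewrite -edge_weightC // /edge_weight /charge yA mul1r excess_ge0 // e_sym.
Qed.

Lemma has_perfect_matching_excess_ge0 : has_perfect_matching e.
Proof.
apply: (@has_perfect_matching_partner _ _ (fun x y => e x y && (0 < edge_weight x y))).
- by move=> x y /andP[].
- by move=> x y /=; case exy: (e x y); rewrite e_sym exy //= (edge_weightC exy).
- move=> x; exact: psumr_eq1_uniq (@edge_weight_ge0 x) (sum_edge_weight x).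
Qed.
End Excess.

Theorem mainTheorem7 (T : finType) (e : rel T) (l : nat) :
  is_tree e -> equibipartite e -> #|T| = l.*2 ->
  ~ has_perfect_matching e ->
  exists A : {set T},
    [/\ #|~: A| < #|A|,
        induced_edges e A = set0 &
        #|induced_edges e (~: A)| = 1].
Proof.
case=> [[e_sym e_irr] _ e_conn e_acyc] [A [indA indAC A_half]] _ no_pm.
have A_edge := independent_compl_edge indA indAC.
have [/existsP[u /existsP[v /and3P[euv uA excess_lt0]]] | all_ge0] :=
  boolP [exists u, exists v, [&& e u v, u \in A & (excess A (side e u v) < 0)%R]].
- have us : u \in side e u v by rewrite inE connect0.
  have vNs : v \notin side e u v by apply: notin_side => //; rewrite e_sym.
  have A_lt : #|A :&: side e u v| < #|side e u v :\: A|.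
    by move: excess_lt0; rewrite excessE; lia.
  exists (symdiff A (side e u v)).
  by apply: (symdiff_partition (A := A) (u := u) (v := v)) => // x y; apply: side_cross.
- case: no_pm; apply: (has_perfect_matching_excess_ge0 (A := A)) => // u v euv uA.
  by move/existsPn/(_ u)/existsPn/(_ v): all_ge0; rewrite euv uA /= -leNgt.
Qed.
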